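(* Let $m \geq 0$ be a fixed integer, and for $T>e$ put $\Delta = \Delta(T) = 1/\log^{m+2} T$. Then the following two statements are equivalent: \begin{enumerate} \item For every $\epsilon > 0$, $\zeta^{(m)}(1+it) = O(\log^{\epsilon} t)$ as $t \to \infty$. \item For every $\epsilon > 0$ and every positive integer $k$, \[ \frac{1}{2\Delta} \int_{T-\Delta}^{T+\Delta} \bigl|\zeta^{(m)}(1+it)\bigr|^{2k}\, dt = O(\log^{\epsilon} T) \quad \text{as } T \to \infty . \] \end{enumerate} (The implied $O$-constants may depend on $m$, $\epsilon$ and $k$.)
   Context: $\zeta(s)$ denotes the Riemann zeta function, $s=\sigma+it$, defined by $\sum_{n\ge1} n^{-s}$ for $\sigma>1$ and meromorphically continued to $\mathbb{C}$ with only a simple pole at $s=1$; $\zeta^{(m)}$ is its $m$-th derivative with respect to $s$, and $\zeta^{(m)}(1+it)$ is its value on the line $\sigma=1$ for real $t$. *)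

From Stdlib Require Import Reals Lra ClassicalEpsilon.
Open Scope R_scope.

Definition choose_R (P : R -> Prop) : R := epsilon (inhabits 0) P.

(* n-th term (n >= 1) of the termwise m-th s-derivative of sum n^{-s},
   at s = sigma + i t:  (-log n)^m n^{-sigma} e^{-i t log n}. *)
Definition zterm_re (m : nat) (sigma t : R) (n : nat) : R :=
  (- ln (INR n)) ^ m * Rpower (INR n) (- sigma) * cos (t * ln (INR n)).
Definition zterm_im (m : nat) (sigma t : R) (n : nat) : R :=
  - ((- ln (INR n)) ^ m * Rpower (INR n) (- sigma) * sin (t * ln (INR n))).

(* zeta^{(m)}(sigma + i t) for sigma > 1, via the (absolutely convergent)
   Dirichlet series sum_{n>=1} (-log n)^m n^{-s}. *)
Definition dir_re (m : nat) (sigma t : R) : R :=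
  choose_R (fun l => infinite_sum (fun n => zterm_re m sigma t (S n)) l).
Definition dir_im (m : nat) (sigma t : R) : R :=
  choose_R (fun l => infinite_sum (fun n => zterm_im m sigma t (S n)) l).

Definition right_lim_at_1 (f : R -> R) (l : R) : Prop :=
  forall eps, 0 < eps -> exists d, 0 < d /\
    forall s, 1 < s < 1 + d -> Rabs (f s - l) < eps.

(* zeta^{(m)}(1 + i t): value of the continuous extension of the
   meromorphic continuation to the line sigma = 1 (t <> 0). *)
Definition zeta_line_re (m : nat) (t : R) : R :=
  choose_R (right_lim_at_1 (fun s => dir_re m s t)).
Definition zeta_line_im (m : nat) (t : R) : R :=
  choose_R (right_lim_at_1 (fun s => dir_im m s t)).

Definition zeta_abs (m : nat) (t : R) : R :=
  sqrt (zeta_line_re m t ^ 2 + zeta_line_im m t ^ 2).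

Definition DeltaT (m : nat) (T : R) : R := / (ln T) ^ (m + 2).

(* (1) => (2) is immediate: a pointwise bound on the window [T - Delta, T + Delta] bounds the
   mean.  For (2) => (1) it suffices, taking k = 1, that |zeta^(m)(1+it)| varies by at most a
   constant K_m on each window: if |zeta^(m)(1+iT)| = K_m + y, then |zeta^(m)(1+iu)| >= y on the
   whole window, so y^2 <= mean <= C log^(2 eps) T.
   The oscillation bound comes from the first-order Euler-Maclaurin representation
     zeta^(m)(s) = sum_(n <= M) f(n) - G(M) + sum_(n > M) (f(n) - (G(n) - G(n-1))),
   with f(x) = (-log x)^m x^(-s) and G a primitive of f, valid for sg >= 1, t <> 0 and
   independent of M.  It also shows that the limit defining zeta^(m)(1+it) exists and is
   continuous in t.  With M ~ T^2 the finite sum moves by O(Delta log^(m+2) T) = O(1) across the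
   window, G(M) = O(1), and the tail is O(|t| / sqrt M) = O(1). *)

From Stdlib Require Import Reals Lra Lia Psatz ZArith ClassicalEpsilon.
From Coquelicot Require Import Coquelicot.
Open Scope R_scope.

Lemma exp_mult_INR (y : R) (k : nat) : exp (INR k * y) = exp y ^ k.
Proof.
  induction k as [|k IH]; simpl pow.
  - rewrite Rmult_0_l, exp_0; reflexivity.
  - rewrite S_INR, Rmult_plus_distr_r, Rmult_1_l, exp_plus, IH. ring.
Qed.

Lemma le_exp_self (y : R) : y <= exp y.
Proof. pose proof (exp_ineq1_le y); lra. Qed.

Lemma exp_le_compat (x y : R) : x <= y -> exp x <= exp y.
Proof. intros [H|H]; [left; apply exp_increasing; auto | rewrite H; lra]. Qed.

Lemma pow_le_exp (z b : R) (k : nat) : 0 <= z -> 0 < b ->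
  z ^ k <= (INR k / b) ^ k * exp (b * z).
Proof.
  intros Hz Hb. destruct k as [|k].
  - simpl. pose proof (exp_ineq1_le (b * z)). nra.
  - set (K := INR (S k)). assert (HK : 0 < K) by apply lt_0_INR, Nat.lt_0_succ.
    set (y := b * z / K).
    assert (Hy : 0 <= y) by (unfold y; apply Rdiv_le_0_compat; nra).
    replace z with ((K / b) * y) at 1 by (unfold y; field; lra).
    rewrite Rpow_mult_distr. apply Rmult_le_compat_l.
    + apply pow_le, Rlt_le, Rdiv_lt_0_compat; lra.
    + replace (b * z) with (K * y) by (unfold y; field; lra).
      unfold K. rewrite exp_mult_INR. apply pow_incr. split; [lra | apply le_exp_self].
Qed.

Lemma ln_le_sub1 (x : R) : 0 < x -> ln x <= x - 1.
Proof.
  intros Hx. rewrite <- (ln_exp (x - 1)). apply ln_le; auto.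
  pose proof (exp_ineq1_le (x - 1)); lra.
Qed.

Lemma ln_nonneg (y : R) : 1 <= y -> 0 <= ln y.
Proof. intros; rewrite <- ln_1; apply ln_le; lra. Qed.

Lemma ln_ge1 (T : R) : 3 <= T -> 1 <= ln T.
Proof. intros HT. rewrite <- (ln_exp 1). apply ln_le; [apply exp_pos|]. pose proof exp_le_3; lra. Qed.

Lemma Rpower_ge1 (x e : R) : 1 <= x -> 0 <= e -> 1 <= Rpower x e.
Proof. intros. rewrite <- (Rpower_O x) by lra. apply Rle_Rpower; lra. Qed.

Lemma Rpower_opp_le_inv (y sg : R) : 1 <= y -> 1 <= sg -> 0 < Rpower y (- sg) <= / y.
Proof.
  intros Hy Hs. split; [apply exp_pos|].
  pose proof (ln_nonneg y Hy). unfold Rpower.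
  rewrite <- (exp_ln y) at 2 by lra. rewrite <- exp_Ropp. apply exp_le_compat. nra.
Qed.

Lemma pow_pred_le (L : R) (m : nat) : 0 <= L -> INR m * L ^ pred m <= INR m * (1 + L) ^ m.
Proof.
  intros HL. destruct m as [|k]; simpl pred; [simpl; lra|].
  apply Rmult_le_compat_l; [apply pos_INR|]. simpl.
  assert (L ^ k <= (1 + L) ^ k) by (apply pow_incr; lra).
  assert (0 <= L ^ k) by (apply pow_le; lra). nra.
Qed.

Lemma Rle_of_sqr_le (u v : R) : 0 <= v -> u * u <= v * v -> u <= v.
Proof. intros. destruct (Rle_or_lt u v); nra. Qed.

Lemma DeltaT_bounds (m : nat) (T : R) : 3 <= T -> 0 < DeltaT m T <= 1.
Proof.
  intros HT. pose proof (ln_ge1 T HT). unfold DeltaT.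
  assert (1 <= ln T ^ (m + 2)) by (rewrite <- (pow1 (m + 2)); apply pow_incr; lra).
  split; [apply Rinv_0_lt_compat; lra|]. rewrite <- Rinv_1. apply Rinv_le_contravar; lra.
Qed.

Lemma is_derive_Rmult (f g : R -> R) (x a b : R) : is_derive f x a -> is_derive g x b ->
  is_derive (fun y => f y * g y) x (a * g x + f x * b).
Proof. intros Hf Hg. exact (is_derive_mult f g x a b Hf Hg Rmult_comm). Qed.

Lemma is_derive_Rplus (f g : R -> R) (x a b : R) : is_derive f x a -> is_derive g x b ->
  is_derive (fun y => f y + g y) x (a + b).
Proof. intros Hf Hg. exact (is_derive_plus f g x a b Hf Hg). Qed.

Lemma is_derive_Rminus (f g : R -> R) (x a b : R) : is_derive f x a -> is_derive g x b ->
  is_derive (fun y => f y - g y) x (a - b).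
Proof. intros Hf Hg. exact (is_derive_minus f g x a b Hf Hg). Qed.

Lemma is_derive_Rcomp (f g : R -> R) (x a b : R) : is_derive f (g x) a -> is_derive g x b ->
  is_derive (fun y => f (g y)) x (b * a).
Proof. intros Hf Hg. exact (is_derive_comp f g x a b Hf Hg). Qed.

Lemma is_derive_val (f : R -> R) (x a b : R) : a = b -> is_derive f x a -> is_derive f x b.
Proof. intros ->; auto. Qed.

Lemma is_derive_continuity_pt (f : R -> R) (x a : R) : is_derive f x a -> continuity_pt f x.
Proof.
  intros H. apply continuity_pt_filterlim, (ex_derive_continuous f x). now exists a.
Qed.

Lemma mvt_bound (h h' : R -> R) a b K : a <= b ->
  (forall y, a <= y <= b -> is_derive h y (h' y)) ->
  (forall y, a <= y <= b -> Rabs (h' y) <= K) ->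
  Rabs (h b - h a) <= K * (b - a).
Proof.
  intros Hab Hd Hb.
  destruct (MVT_gen h a b h') as [c [Hc E]].
  - intros y Hy. rewrite Rmin_left, Rmax_right in Hy by lra. apply Hd; lra.
  - intros y Hy. rewrite Rmin_left, Rmax_right in Hy by lra.
    apply (is_derive_continuity_pt h y (h' y)), Hd; lra.
  - rewrite Rmin_left, Rmax_right in Hc by lra. rewrite E, Rabs_mult, (Rabs_right (b - a)) by lra.
    apply Rmult_le_compat_r; [lra|]. apply Hb; lra.
Qed.

Lemma Rabs_sub_le_of_derive (h h' : R -> R) a b :
  (forall y, is_derive h y (h' y)) -> (forall y, Rabs (h' y) <= 1) ->
  Rabs (h a - h b) <= Rabs (a - b).
Proof.
  intros Hd Hb. destruct (Rle_or_lt a b) as [Hab|Hab].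
  - rewrite <- Rabs_Ropp, Ropp_minus_distr, (Rabs_left1 (a - b)) by lra.
    eapply Rle_trans; [apply (mvt_bound h h' a b 1); auto|]. lra.
  - rewrite (Rabs_right (a - b)) by lra.
    eapply Rle_trans; [apply (mvt_bound h h' b a 1); auto; lra|]. lra.
Qed.

Lemma Rabs_sin_le (x : R) : Rabs (sin x) <= 1.
Proof. apply Rabs_le, SIN_bound. Qed.

Lemma Rabs_cos_le (x : R) : Rabs (cos x) <= 1.
Proof. apply Rabs_le, COS_bound. Qed.

Lemma Rabs_cos_sub_le (a b : R) : Rabs (cos a - cos b) <= Rabs (a - b).
Proof.
  apply (Rabs_sub_le_of_derive cos (fun y => - sin y)); intros y.
  - apply is_derive_Reals, derivable_pt_lim_cos.
  - rewrite Rabs_Ropp; apply Rabs_sin_le.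
Qed.

Lemma Rabs_sin_sub_le (a b : R) : Rabs (sin a - sin b) <= Rabs (a - b).
Proof.
  apply (Rabs_sub_le_of_derive sin cos); intros y.
  - apply is_derive_Reals, derivable_pt_lim_sin.
  - apply Rabs_cos_le.
Qed.

(* The first-order Euler-Maclaurin estimate on one unit interval. *)
Lemma increment_error_le (g h h' : R -> R) a K :
  (forall y, a <= y <= a + 1 -> is_derive g y (h y)) ->
  (forall y, a <= y <= a + 1 -> is_derive h y (h' y)) ->
  (forall y, a <= y <= a + 1 -> Rabs (h' y) <= K) ->
  Rabs (h (a + 1) - (g (a + 1) - g a)) <= K.
Proof.
  intros Hg Hh HK.
  assert (Hd : forall y, a <= y <= a + 1 ->
            is_derive (fun y => g y - y * h (a + 1)) y (h y - h (a + 1))).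
  { intros y Hy. eapply is_derive_val;
      [|apply is_derive_Rminus;
          [apply Hg; lra | apply is_derive_Rmult; [apply is_derive_id | apply is_derive_const]]].
    cbn; ring. }
  assert (Hd' : forall y, a <= y <= a + 1 -> Rabs (h y - h (a + 1)) <= K).
  { intros y Hy. rewrite <- Rabs_Ropp, Ropp_minus_distr.
    assert (0 <= K) by (specialize (HK a); pose proof (Rabs_pos (h' a)); lra).
    eapply Rle_trans; [apply (mvt_bound h h' y (a + 1) K); try lra|].
    - intros; apply Hh; lra.
    - intros; apply HK; lra.
    - nra. }
  pose proof (mvt_bound _ _ a (a + 1) K ltac:(lra) Hd Hd') as Hk. cbv beta in Hk.
  rewrite <- Rabs_Ropp. replace K with (K * (a + 1 - a)) by ring.
  replace (- (h (a + 1) - (g (a + 1) - g a)))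
    with (g (a + 1) - (a + 1) * h (a + 1) - (g a - a * h (a + 1)))
    by ring.
  exact Hk.
Qed.

Definition cderive (F : R -> C) (x : R) (D : C) : Prop :=
  is_derive (fun y => fst (F y)) x (fst D) /\ is_derive (fun y => snd (F y)) x (snd D).

Lemma cderive_val F x D1 D2 : D1 = D2 -> cderive F x D1 -> cderive F x D2.
Proof. intros ->; auto. Qed.

Lemma cderive_plus F G x DF DG : cderive F x DF -> cderive G x DG ->
  cderive (fun y => (F y + G y)%C) x (DF + DG)%C.
Proof. intros [A1 A2] [B1 B2]; split; simpl; apply is_derive_Rplus; auto. Qed.

Lemma cderive_mult F G x DF DG : cderive F x DF -> cderive G x DG ->
  cderive (fun y => (F y * G y)%C) x (DF * G x + F x * DG)%C.
Proof.
  intros [A1 A2] [B1 B2]; split; simpl.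
  - eapply is_derive_val; [|apply is_derive_Rminus; apply is_derive_Rmult; eauto]. simpl; ring.
  - eapply is_derive_val; [|apply is_derive_Rplus; apply is_derive_Rmult; eauto]. simpl; ring.
Qed.

Lemma cderive_const (c : C) x : cderive (fun _ => c) x 0%C.
Proof. split; simpl; auto_derive; auto. Qed.

Lemma cderive_RtoC (r : R -> R) x d : is_derive r x d -> cderive (fun y => RtoC (r y)) x (RtoC d).
Proof. intros H; split; simpl; [exact H | auto_derive; auto]. Qed.

Lemma cderive_comp (F : R -> C) (g : R -> R) x D dg :
  cderive F (g x) D -> is_derive g x dg -> cderive (fun y => F (g y)) x (RtoC dg * D)%C.
Proof.
  intros [A1 A2] B; split; simpl.
  - eapply is_derive_val; [|apply (is_derive_Rcomp (fun z => fst (F z)) g); eauto]. simpl; ring.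
  - eapply is_derive_val; [|apply (is_derive_Rcomp (fun z => snd (F z)) g); eauto]. simpl; ring.
Qed.

Lemma Cmod_le_Rabs_add (z : C) : Cmod z <= Rabs (fst z) + Rabs (snd z).
Proof.
  pose proof (Rabs_pos (fst z)); pose proof (Rabs_pos (snd z)).
  unfold Cmod. rewrite <- (sqrt_pow2 (Rabs (fst z) + Rabs (snd z))) by lra.
  apply sqrt_le_1_alt. rewrite <- (pow2_abs (fst z)), <- (pow2_abs (snd z)). nra.
Qed.

Lemma Rabs_fst_le_Cmod (z : C) : Rabs (fst z) <= Cmod z.
Proof. pose proof (Rmax_Cmod z). pose proof (Rmax_l (Rabs (fst z)) (Rabs (snd z))). lra. Qed.

Lemma Rabs_snd_le_Cmod (z : C) : Rabs (snd z) <= Cmod z.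
Proof. pose proof (Rmax_Cmod z). pose proof (Rmax_r (Rabs (fst z)) (Rabs (snd z))). lra. Qed.

Definition cexp (w : C) (u : R) : C :=
  (exp (fst w * u) * cos (snd w * u), exp (fst w * u) * sin (snd w * u)).

Lemma cderive_cexp w u : cderive (cexp w) u (w * cexp w u)%C.
Proof. unfold cexp; split; simpl; auto_derive; auto; ring. Qed.

Lemma Cmod_cexp w u : Cmod (cexp w u) = exp (fst w * u).
Proof.
  unfold Cmod, cexp; cbn [fst snd].
  replace ((exp (fst w * u) * cos (snd w * u)) ^ 2 + (exp (fst w * u) * sin (snd w * u)) ^ 2)
    with (exp (fst w * u) ^ 2 * (sin (snd w * u) ^ 2 + cos (snd w * u) ^ 2)) by ring.
  rewrite <- !Rsqr_pow2, sin2_cos2, Rmult_1_r, Rsqr_pow2.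
  apply sqrt_pow2, Rlt_le, exp_pos.
Qed.

(* The primitive of [(-u)^m e^(w u)] obtained by integrating by parts [m] times. *)
Fixpoint powexp_prim (m : nat) (w : C) (u : R) : C :=
  match m with
  | O => (cexp w u / w)%C
  | S k => (RtoC ((- u) ^ S k) * cexp w u / w + RtoC (INR (S k)) / w * powexp_prim k w u)%C
  end.

Lemma cderive_powexp_prim m (w : C) u : w <> 0%C ->
  cderive (powexp_prim m w) u (RtoC ((- u) ^ m) * cexp w u)%C.
Proof.
  intros Hw. revert u. induction m as [|k IH]; intros u; cbn [powexp_prim].
  - eapply cderive_val;
      [|apply (cderive_mult (cexp w) (fun _ => / w)%C); [apply cderive_cexp | apply cderive_const]].
    simpl pow. field. auto.
  - assert (Dpow : is_derive (fun y : R => (- y) ^ S k) u (- (INR (S k) * (- u) ^ k))).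
    { auto_derive; auto. rewrite S_INR. destruct k; simpl; ring. }
    eapply cderive_val; [|apply cderive_plus;
      [apply (cderive_mult (fun y => RtoC ((- y) ^ S k) * cexp w y)%C (fun _ => / w)%C);
         [apply cderive_mult; [apply cderive_RtoC, Dpow | apply cderive_cexp] | apply cderive_const]
      | apply cderive_mult; [apply cderive_const | apply IH]]].
    set (c := INR (S k)). rewrite <- !(tech_pow_Rmult (- u) k). set (p := (- u) ^ k).
    rewrite ?RtoC_opp, ?RtoC_mult, ?RtoC_opp. field. auto.
Qed.

Lemma Cmod_powexp_prim_le m w u : 1 <= Cmod w -> 0 <= u ->
  Cmod (powexp_prim m w u) <= exp (fst w * u) * INR (Factorial.fact (S m)) * (1 + u) ^ m / Cmod w.
Proof.
  intros Hw Hu. assert (Hw0 : w <> 0%C) by (intros E; rewrite E, Cmod_0 in Hw; lra).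
  set (E := exp (fst w * u)). assert (HE : 0 < E) by apply exp_pos.
  assert (Hiw : / Cmod w <= 1) by (rewrite <- Rinv_1; apply Rinv_le_contravar; lra).
  assert (Hiw0 : 0 < / Cmod w) by (apply Rinv_0_lt_compat; lra).
  induction m as [|k IH]; cbn [powexp_prim].
  - rewrite Cmod_div, Cmod_cexp by auto. simpl. unfold E. lra.
  - eapply Rle_trans; [apply Cmod_triangle|].
    rewrite Cmod_mult, !Cmod_div, Cmod_mult, !Cmod_R, Cmod_cexp by auto. fold E.
    rewrite Rabs_right with (r := INR (S k)) by (apply Rle_ge, pos_INR).
    rewrite <- RPow_abs, Rabs_Ropp, (Rabs_right u) by lra.
    set (F := INR (Factorial.fact (S k))) in *.
    assert (HF1 : 1 <= F) by (unfold F; apply (le_INR 1), Factorial.lt_O_fact).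
    replace (INR (Factorial.fact (S (S k)))) with (INR (S (S k)) * F)
      by (unfold F; rewrite <- mult_INR; reflexivity).
    rewrite !S_INR.
    assert (Hup : u ^ S k <= (1 + u) ^ S k) by (apply pow_incr; lra).
    assert (Hp : 0 <= (1 + u) ^ k) by (apply pow_le; lra).
    assert (Hup2 : (1 + u) ^ k <= (1 + u) ^ S k) by (simpl; nra).
    pose proof (pos_INR k).
    unfold Rdiv in *.
    set (iw := / Cmod w) in *. set (P := (1 + u) ^ k) in *. set (Q := (1 + u) ^ S k) in *.
    pose proof (Cmod_ge_0 (powexp_prim k w u)).
    assert (T1 : u ^ S k * E * iw <= E * Q * iw).
    { replace (E * Q * iw) with (Q * (E * iw)) by ring.
      replace (u ^ S k * E * iw) with (u ^ S k * (E * iw)) by ring.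
      apply Rmult_le_compat_r; [apply Rmult_le_pos|]; lra. }
    assert (T2 : iw * Cmod (powexp_prim k w u) <= E * F * Q * iw).
    { apply Rle_trans with (1 * (E * F * P * iw)).
      - apply Rmult_le_compat; lra.
      - assert (0 <= E * F) by (apply Rmult_le_pos; lra).
        rewrite Rmult_1_l. apply Rmult_le_compat_r; [lra|]. apply Rmult_le_compat_l; lra. }
    assert (0 <= E * F * Q * iw) by (repeat apply Rmult_le_pos; try lra; unfold Q; apply pow_le; lra).
    assert (E * Q * iw <= E * F * Q * iw) by nra.
    assert ((INR k + 1) * (iw * Cmod (powexp_prim k w u)) <= (INR k + 1) * (E * F * Q * iw))
      by (apply Rmult_le_compat_l; lra).
    nra.
Qed.

Definition ccontinuous (F : R -> C) (x : R) : Prop :=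
  continuity_pt (fun p => fst (F p)) x /\ continuity_pt (fun p => snd (F p)) x.

Lemma ccontinuous_plus F G x : ccontinuous F x -> ccontinuous G x ->
  ccontinuous (fun p => (F p + G p)%C) x.
Proof.
  intros [A1 A2] [B1 B2]; split.
  - exact (continuity_pt_plus _ _ x A1 B1).
  - exact (continuity_pt_plus _ _ x A2 B2).
Qed.

Lemma ccontinuous_opp F x : ccontinuous F x -> ccontinuous (fun p => (- F p)%C) x.
Proof. intros [A1 A2]; split; [exact (continuity_pt_opp _ x A1) | exact (continuity_pt_opp _ x A2)]. Qed.

Lemma ccontinuous_mult F G x : ccontinuous F x -> ccontinuous G x ->
  ccontinuous (fun p => (F p * G p)%C) x.
Proof.
  intros [A1 A2] [B1 B2]; split.
  - exact (continuity_pt_minus _ _ x (continuity_pt_mult _ _ x A1 B1) (continuity_pt_mult _ _ x A2 B2)).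
  - exact (continuity_pt_plus _ _ x (continuity_pt_mult _ _ x A1 B2) (continuity_pt_mult _ _ x A2 B1)).
Qed.

Lemma ccontinuous_const (c : C) x : ccontinuous (fun _ => c) x.
Proof. split; apply continuity_pt_const; intros a b; reflexivity. Qed.

Lemma ccontinuous_inv F x : ccontinuous F x -> F x <> 0%C -> ccontinuous (fun p => (/ F p)%C) x.
Proof.
  intros [A1 A2] Hn.
  set (f := fun p => fst (F p)) in A1. set (g := fun p => snd (F p)) in A2.
  assert (Hd : f x ^ 2 + g x ^ 2 <> 0).
  { intros E. apply Hn. assert (f x = 0 /\ g x = 0) as [E1 E2] by (split; nra).
    apply injective_projections; auto. }
  split; unfold Cinv; simpl.
  - change (continuity_pt (fun p => f p / (f p ^ 2 + g p ^ 2)) x). reg.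
  - change (continuity_pt (fun p => - g p / (f p ^ 2 + g p ^ 2)) x). reg.
Qed.

Lemma ccontinuous_cexp (W : R -> C) u x : ccontinuous W x -> ccontinuous (fun p => cexp (W p) u) x.
Proof.
  intros [A1 A2]. set (f := fun p => fst (W p)) in A1. set (g := fun p => snd (W p)) in A2.
  split; unfold cexp; simpl.
  - change (continuity_pt (fun p => exp (f p * u) * cos (g p * u)) x). reg.
  - change (continuity_pt (fun p => exp (f p * u) * sin (g p * u)) x). reg.
Qed.

Lemma ccontinuous_powexp_prim m (W : R -> C) u x : ccontinuous W x -> W x <> 0%C ->
  ccontinuous (fun p => powexp_prim m (W p) u) x.
Proof.
  intros HW Hn. assert (Hi : ccontinuous (fun p => (/ W p)%C) x) by (apply ccontinuous_inv; auto).
  induction m as [|k IH]; cbn [powexp_prim]; unfold Cdiv.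
  - apply ccontinuous_mult; auto. apply ccontinuous_cexp; auto.
  - apply ccontinuous_plus; apply ccontinuous_mult; auto.
    + apply ccontinuous_mult; [apply ccontinuous_const | apply ccontinuous_cexp; auto].
    + apply ccontinuous_mult; [apply ccontinuous_const | auto].
Qed.

Lemma continuous_of_uniform_approx (F : R -> C) (D : R -> Prop) x0 : D x0 ->
  (forall eps, 0 < eps -> exists A : R -> C, ccontinuous A x0 /\
     forall x, D x -> Cmod (F x - A x) <= eps) ->
  forall eps, 0 < eps -> exists d, 0 < d /\
    forall x, D x -> Rabs (x - x0) < d -> Cmod (F x - F x0) < eps.
Proof.
  intros HD Hap eps He.
  destruct (Hap (eps / 6) ltac:(lra)) as [A [[HA1 HA2] HFA]].
  destruct (HA1 (eps / 6) ltac:(lra)) as [d1 [Hd1 K1]].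
  destruct (HA2 (eps / 6) ltac:(lra)) as [d2 [Hd2 K2]].
  exists (Rmin d1 d2). split; [apply Rmin_pos; auto|]. intros x Hx Hxd.
  assert (Hclose : forall d (f : R -> R), 0 < d ->
            (forall y, D_x no_cond x0 y /\ R_dist y x0 < d -> R_dist (f y) (f x0) < eps / 6) ->
            Rabs (x - x0) < d -> Rabs (f x - f x0) < eps / 6).
  { intros d f Hd K Hxd'. destruct (Req_dec x x0) as [->|Hne].
    - rewrite Rminus_diag, Rabs_R0; lra.
    - apply (K x). split; [split; [constructor | auto] | auto]. }
  pose proof (Rmin_l d1 d2). pose proof (Rmin_r d1 d2).
  assert (E1 := Hclose d1 _ Hd1 K1 ltac:(lra)). assert (E2 := Hclose d2 _ Hd2 K2 ltac:(lra)).
  assert (Cmod (A x - A x0) < eps / 3).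
  { eapply Rle_lt_trans; [apply Cmod_le_Rabs_add|]. simpl. unfold Rminus in E1, E2. lra. }
  pose proof (HFA x Hx). pose proof (HFA x0 HD).
  replace (F x - F x0)%C with ((F x - A x) + (A x - A x0) - (F x0 - A x0))%C by ring.
  eapply Rle_lt_trans; [apply Cmod_triangle|]. rewrite Cmod_opp.
  pose proof (Cmod_triangle (F x - A x) (A x - A x0)). unfold Cminus in *. lra.
Qed.

Lemma ccontinuous_of_local_uniform_approx (F : R -> C) x0 r : 0 < r ->
  (forall eps, 0 < eps -> exists A : R -> C, ccontinuous A x0 /\
     forall x, Rabs (x - x0) < r -> Cmod (F x - A x) <= eps) ->
  ccontinuous F x0.
Proof.
  intros Hr Hap.
  assert (H0 : Rabs (x0 - x0) < r) by (rewrite Rminus_diag, Rabs_R0; auto).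
  pose proof (continuous_of_uniform_approx F _ x0 H0 Hap) as K.
  split; intros eps He; destruct (K eps He) as [d [Hd Kd]];
    exists (Rmin d r); (split; [apply Rmin_pos; auto|]);
    intros x [_ Hxd]; simpl in Hxd; unfold R_dist in *;
    pose proof (Rmin_l d r); pose proof (Rmin_r d r);
    specialize (Kd x ltac:(lra) ltac:(lra)); simpl.
  - exact (Rle_lt_trans _ _ _ (Rabs_fst_le_Cmod (F x - F x0)%C) Kd).
  - exact (Rle_lt_trans _ _ _ (Rabs_snd_le_Cmod (F x - F x0)%C) Kd).
Qed.

(** * The Euler-Maclaurin error terms *)

(* [dterm m sg t x] is [(-ln x)^m x^(-s)] at [s = sg + i t];
   at [x = INR n] its parts are [zterm_re] and [zterm_im]. *)
Definition dterm (m : nat) (sg t x : R) : C :=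
  ((- ln x) ^ m * Rpower x (- sg) * cos (t * ln x),
   - ((- ln x) ^ m * Rpower x (- sg) * sin (t * ln x))).

Definition one_sub_s (sg t : R) : C := (1 - sg, - t).

(* Substituting [x = e^u] turns [dterm] into [(-u)^m e^((1-s) u)] times [dx/du]. *)
Definition dterm_prim (m : nat) (sg t x : R) : C := powexp_prim m (one_sub_s sg t) (ln x).

Lemma one_sub_s_neq0 sg t : t <> 0 -> one_sub_s sg t <> 0%C.
Proof. intros Ht E. apply Ht. unfold one_sub_s in E. injection E; intros; lra. Qed.

Lemma Rabs_le_Cmod_one_sub_s sg t : Rabs t <= Cmod (one_sub_s sg t).
Proof. pose proof (Rabs_snd_le_Cmod (one_sub_s sg t)) as H. simpl in H. now rewrite Rabs_Ropp in H. Qed.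

Lemma cderive_dterm_prim m sg t x : 0 < x -> t <> 0 ->
  cderive (dterm_prim m sg t) x (dterm m sg t x).
Proof.
  intros Hx Ht. unfold dterm_prim.
  eapply cderive_val; [|apply (cderive_comp (powexp_prim m (one_sub_s sg t)) ln);
    [apply cderive_powexp_prim, one_sub_s_neq0, Ht | apply is_derive_Reals, derivable_pt_lim_ln, Hx]].
  assert (Ex : exp ((1 - sg) * ln x) = x * Rpower x (- sg)).
  { unfold Rpower. replace ((1 - sg) * ln x) with (ln x + - sg * ln x) by ring.
    rewrite exp_plus, exp_ln; auto. }
  unfold dterm, cexp, one_sub_s; simpl.
  replace (- t * ln x) with (- (t * ln x)) by ring.
  rewrite cos_neg, sin_neg, Ex.
  apply injective_projections; simpl; field; lra.
Qed.

Definition dterm_part_deriv (m : nat) (sg : R) (tr tr' : R -> R) (y : R) : R :=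
  (INR m * (- ln y) ^ pred m * (- / y)) * Rpower y (- sg) * tr y
  + (- ln y) ^ m * (Rpower y (- sg) * (- sg * / y)) * tr y
  + (- ln y) ^ m * Rpower y (- sg) * tr' y.

Lemma is_derive_dterm_part m sg tr tr' y : 0 < y -> is_derive tr y (tr' y) ->
  is_derive (fun z => (- ln z) ^ m * Rpower z (- sg) * tr z) y (dterm_part_deriv m sg tr tr' y).
Proof.
  intros Hy Ht. unfold Rpower, dterm_part_deriv.
  eapply is_derive_val; [|apply is_derive_Rmult; [|exact Ht]]; [|auto_derive; auto].
  unfold Rpower. simpl. ring.
Qed.

Lemma Rabs_dterm_part_deriv_le m sg t tr tr' y : 1 <= y -> 1 <= sg -> Rabs (tr y) <= 1 ->
  Rabs (tr' y) <= Rabs t / y ->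
  Rabs (dterm_part_deriv m sg tr tr' y) <= (INR m + sg + Rabs t) * (1 + ln y) ^ m / y ^ 2.
Proof.
  intros Hy Hs Htr Htr'. unfold dterm_part_deriv.
  pose proof (ln_nonneg y Hy) as HL. set (L := ln y) in *.
  destruct (Rpower_opp_le_inv y sg Hy Hs) as [HP1 HP2]. set (P := Rpower y (- sg)) in *.
  set (q := / y) in *. assert (Hq : 0 < q <= 1).
  { unfold q; split; [apply Rinv_0_lt_compat; lra|]. rewrite <- Rinv_1. apply Rinv_le_contravar; lra. }
  pose proof (pos_INR m). pose proof (Rabs_pos t).
  pose proof (Rabs_pos (tr y)). pose proof (Rabs_pos (tr' y)).
  assert (E1 : 0 <= L ^ m) by (apply pow_le; lra).
  assert (E2 : 0 <= L ^ pred m) by (apply pow_le; lra).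
  assert (E3 : L ^ m <= (1 + L) ^ m) by (apply pow_incr; lra).
  pose proof (pow_pred_le L m HL) as E4.
  replace (Rabs t / y) with (Rabs t * q) in Htr' by (unfold q, Rdiv; ring).
  replace ((INR m + sg + Rabs t) * (1 + L) ^ m / y ^ 2) with
    ((INR m * (1 + L) ^ m + sg * (1 + L) ^ m + Rabs t * (1 + L) ^ m) * (q * q))
    by (unfold q; field; lra).
  eapply Rle_trans; [apply Rabs_triang|].
  eapply Rle_trans; [apply Rplus_le_compat_r, Rabs_triang|].
  rewrite !Rabs_mult, <- !RPow_abs, !Rabs_Ropp, (Rabs_right L), (Rabs_right P), (Rabs_right q),
    (Rabs_right (INR m)), (Rabs_right sg) by lra.
  assert (PT : P * Rabs (tr y) <= q) by nra.
  assert (PT' : P * Rabs (tr' y) <= Rabs t * q * q) by nra.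
  assert (T1 : INR m * L ^ pred m * q * P * Rabs (tr y) <= INR m * (1 + L) ^ m * (q * q)).
  { replace (INR m * L ^ pred m * q * P * Rabs (tr y))
      with ((INR m * L ^ pred m) * (q * (P * Rabs (tr y)))) by ring.
    apply Rmult_le_compat; [apply Rmult_le_pos; lra | | exact E4 | apply Rmult_le_compat_l; lra].
    apply Rmult_le_pos; [lra | apply Rmult_le_pos; lra]. }
  assert (T2 : L ^ m * (P * (sg * q)) * Rabs (tr y) <= sg * (1 + L) ^ m * (q * q)).
  { replace (L ^ m * (P * (sg * q)) * Rabs (tr y)) with ((L ^ m) * (sg * q * (P * Rabs (tr y)))) by ring.
    replace (sg * (1 + L) ^ m * (q * q)) with ((1 + L) ^ m * (sg * q * q)) by ring.
    apply Rmult_le_compat; [lra | | exact E3 | apply Rmult_le_compat_l; [apply Rmult_le_pos|]; lra].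
    apply Rmult_le_pos; [apply Rmult_le_pos | apply Rmult_le_pos]; lra. }
  assert (T3 : L ^ m * P * Rabs (tr' y) <= Rabs t * (1 + L) ^ m * (q * q)).
  { replace (L ^ m * P * Rabs (tr' y)) with ((L ^ m) * (P * Rabs (tr' y))) by ring.
    replace (Rabs t * (1 + L) ^ m * (q * q)) with ((1 + L) ^ m * (Rabs t * q * q)) by ring.
    apply Rmult_le_compat; [lra | apply Rmult_le_pos; lra | exact E3 | exact PT']. }
  lra.
Qed.

Lemma em_part_error_le m sg t a (tr tr' G : R -> R) : 1 <= a -> 1 <= sg ->
  (forall y, a <= y <= a + 1 -> is_derive G y ((- ln y) ^ m * Rpower y (- sg) * tr y)) ->
  (forall y, 1 <= y -> is_derive tr y (tr' y) /\ Rabs (tr y) <= 1 /\ Rabs (tr' y) <= Rabs t / y) ->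
  Rabs ((- ln (a + 1)) ^ m * Rpower (a + 1) (- sg) * tr (a + 1) - (G (a + 1) - G a))
    <= (INR m + sg + Rabs t) * (1 + ln (a + 1)) ^ m / a ^ 2.
Proof.
  intros Ha Hs HG Htr.
  apply (increment_error_le G (fun y => (- ln y) ^ m * Rpower y (- sg) * tr y)
           (dterm_part_deriv m sg tr tr') a); auto.
  - intros y Hy. apply is_derive_dterm_part; [lra | apply Htr; lra].
  - intros y Hy. destruct (Htr y ltac:(lra)) as [_ [B1 B2]].
    eapply Rle_trans; [apply Rabs_dterm_part_deriv_le; eauto; lra|].
    pose proof (ln_nonneg y ltac:(lra)). assert (ln y <= ln (a + 1)) by (apply ln_le; lra).
    pose proof (pos_INR m). pose proof (Rabs_pos t).
    unfold Rdiv. rewrite !Rmult_assoc. apply Rmult_le_compat_l; [lra|]. apply Rmult_le_compat.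
    + apply pow_le; lra.
    + apply Rlt_le, Rinv_0_lt_compat, pow_lt; lra.
    + apply pow_incr; lra.
    + apply Rinv_le_contravar; [apply pow_lt; lra | apply pow_incr; lra].
Qed.

Definition em_error (m : nat) (sg t : R) (n : nat) : C :=
  (dterm m sg t (INR n) - (dterm_prim m sg t (INR n) - dterm_prim m sg t (INR n - 1)))%C.

Lemma em_error_le m sg t n : (2 <= n)%nat -> 1 <= sg -> t <> 0 ->
  let B := (INR m + sg + Rabs t) * (1 + ln (INR n)) ^ m / (INR n - 1) ^ 2 in
  Rabs (fst (em_error m sg t n)) <= B /\ Rabs (snd (em_error m sg t n)) <= B.
Proof.
  intros Hn Hs Ht B. unfold B, em_error.
  assert (Hn' : 2 <= INR n) by (apply (le_INR 2); auto).
  set (a := INR n - 1). replace (INR n) with (a + 1) by (unfold a; ring).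
  assert (Hd : forall y, a <= y <= a + 1 -> cderive (dterm_prim m sg t) y (dterm m sg t y))
    by (intros y Hy; apply cderive_dterm_prim; auto; unfold a in Hy; lra).
  assert (Htrig : forall y, 1 <= y -> Rabs (t * / y) <= Rabs t / y).
  { intros y Hy. rewrite Rabs_mult, (Rabs_right (/ y)); [reflexivity|].
    apply Rle_ge, Rlt_le, Rinv_0_lt_compat; lra. }
  split; simpl.
  - apply (em_part_error_le m sg t a (fun y => cos (t * ln y)) (fun y => - (t * / y) * sin (t * ln y))
             (fun y => fst (dterm_prim m sg t y))); try (unfold a; lra).
    + intros y Hy. apply (proj1 (Hd y Hy)).
    + intros y Hy. split; [|split].
      * auto_derive; [lra | field; lra].
      * apply Rabs_cos_le.
      * rewrite Rabs_mult, Rabs_Ropp. pose proof (Rabs_sin_le (t * ln y)). pose proof (Htrig y Hy).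
        pose proof (Rabs_pos (t * / y)). nra.
  - replace (- ((- ln (a + 1)) ^ m * Rpower (a + 1) (- sg) * sin (t * ln (a + 1))))
      with ((- ln (a + 1)) ^ m * Rpower (a + 1) (- sg) * - sin (t * ln (a + 1))) by ring.
    apply (em_part_error_le m sg t a (fun y => - sin (t * ln y)) (fun y => - (t * / y) * cos (t * ln y))
             (fun y => snd (dterm_prim m sg t y))); try (unfold a; lra).
    + intros y Hy. eapply is_derive_val; [|apply (proj2 (Hd y Hy))]. simpl; ring.
    + intros y Hy. split; [|split].
      * auto_derive; [lra | field; lra].
      * rewrite Rabs_Ropp. apply Rabs_sin_le.
      * rewrite Rabs_mult, Rabs_Ropp. pose proof (Rabs_cos_le (t * ln y)). pose proof (Htrig y Hy).
        pose proof (Rabs_pos (t * / y)). nra.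
Qed.

Definition inv_sqrt_INR (k : nat) : R := / sqrt (INR k).

Lemma inv_sqrt_INR_pos k : (1 <= k)%nat -> 0 < inv_sqrt_INR k.
Proof. intros Hk. apply Rinv_0_lt_compat, sqrt_lt_R0, lt_0_INR; lia. Qed.

Lemma inv_sqrt_INR_cv : Un_cv inv_sqrt_INR 0.
Proof.
  intros eps He. destruct (INR_unbounded (/ (eps * eps))) as [N HN].
  exists (S N). intros n Hn. unfold R_dist, inv_sqrt_INR. rewrite Rminus_0_r.
  assert (Hn' : INR N < INR n) by (apply lt_INR; lia).
  assert (0 < / (eps * eps)) by (apply Rinv_0_lt_compat; nra).
  assert (Hs : 0 < sqrt (INR n)) by (apply sqrt_lt_R0; lra).
  rewrite Rabs_right by (left; apply Rinv_0_lt_compat; auto).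
  assert (Hsq : sqrt (INR n) * sqrt (INR n) = INR n) by (apply sqrt_sqrt; lra).
  assert (/ eps < sqrt (INR n)).
  { destruct (Rlt_or_le (/ eps) (sqrt (INR n))) as [h|h]; auto.
    exfalso. assert (0 < / eps) by (apply Rinv_0_lt_compat; lra).
    assert (sqrt (INR n) * sqrt (INR n) <= / eps * / eps) by nra.
    rewrite Hsq, <- Rinv_mult in H1. lra. }
  rewrite <- (Rinv_inv eps). apply Rinv_lt_contravar; auto.
  apply Rmult_lt_0_compat; auto. apply Rinv_0_lt_compat; lra.
Qed.

Lemma inv_sqrt_INR_eventually_le c eps : 0 <= c -> 0 < eps ->
  exists M, (1 <= M)%nat /\ c * inv_sqrt_INR M <= eps.
Proof.
  intros Hc He. destruct (inv_sqrt_INR_cv (eps / (c + 1)) ltac:(apply Rdiv_lt_0_compat; lra)) as [N HN].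
  exists (S N). split; [lia|]. specialize (HN (S N) ltac:(lia)). unfold R_dist in HN.
  pose proof (inv_sqrt_INR_pos (S N) ltac:(lia)).
  rewrite Rminus_0_r, Rabs_right in HN by lra.
  apply Rle_trans with ((c + 1) * inv_sqrt_INR (S N)); [nra|].
  apply Rmult_le_reg_l with (/ (c + 1)); [apply Rinv_0_lt_compat; lra|].
  rewrite <- Rmult_assoc, Rinv_l, Rmult_1_l by lra.
  replace (/ (c + 1) * eps) with (eps / (c + 1)) by (unfold Rdiv; ring). lra.
Qed.

Lemma is_series_telescope (v : nat -> R) M : Un_cv v 0 ->
  is_series (fun k => v (k + M)%nat - v (k + M + 1)%nat) (v M).
Proof.
  intros Hv. apply is_series_Reals. intros eps He.
  destruct (Hv eps He) as [N HN]. exists N. intros n Hn.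
  assert (Hsum : forall n,
            sum_f_R0 (fun k => v (k + M)%nat - v (k + M + 1)%nat) n = v M - v (n + M + 1)%nat).
  { induction n0 as [|n0 IH]; simpl; [reflexivity|].
    rewrite IH. replace (S (n0 + M)) with (n0 + M + 1)%nat by lia. ring. }
  unfold R_dist. rewrite Hsum.
  specialize (HN (n + M + 1)%nat ltac:(lia)). unfold R_dist in HN.
  replace (v M - v (n + M + 1)%nat - v M) with (- (v (n + M + 1)%nat - 0)) by ring.
  rewrite Rabs_Ropp; auto.
Qed.

Lemma Series_le_telescope (a : nat -> R) c M : 0 <= c ->
  (forall k, Rabs (a k) <= c * (inv_sqrt_INR (k + M) - inv_sqrt_INR (k + M + 1))) ->
  ex_series a /\ Rabs (Series a) <= c * inv_sqrt_INR M.
Proof.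
  intros Hc Ha.
  set (b := fun k => c * (inv_sqrt_INR (k + M) - inv_sqrt_INR (k + M + 1))).
  assert (Hb : is_series b (c * inv_sqrt_INR M)).
  { apply (is_series_scal_l c (fun k => inv_sqrt_INR (k + M)%nat - inv_sqrt_INR (k + M + 1)%nat)).
    apply is_series_telescope, inv_sqrt_INR_cv. }
  assert (Ea : ex_series (fun k => Rabs (a k))).
  { apply (ex_series_le (fun k => Rabs (a k)) b); [|eexists; eauto]. intros k.
    change (norm (Rabs (a k))) with (Rabs (Rabs (a k))). rewrite Rabs_Rabsolu. apply Ha. }
  split; [apply ex_series_Rabs; auto|].
  eapply Rle_trans; [apply Series_Rabs; auto|].
  rewrite <- (is_series_unique _ _ Hb). apply Series_le; [|eexists; eauto].
  intros k; split; [apply Rabs_pos | apply Ha].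
Qed.

Lemma sqrt_div_sqr_le x : 2 <= x -> sqrt x / (x - 1) ^ 2 <= 8 * (/ sqrt (x - 1) - / sqrt x).
Proof.
  intros Hx.
  set (a := sqrt (x - 1)). set (b := sqrt x).
  assert (Ha2 : a * a = x - 1) by (apply sqrt_sqrt; lra).
  assert (Hb2 : b * b = x) by (apply sqrt_sqrt; lra).
  assert (Ha : 1 <= a) by (rewrite <- sqrt_1; apply sqrt_le_1_alt; lra).
  assert (Hb : 0 <= b) by apply sqrt_pos.
  assert (Hab : b <= 2 * a) by (apply Rle_of_sqr_le; nra).
  assert (Hab' : a <= b) by (apply Rle_of_sqr_le; nra).
  replace (x - 1) with (a * a) by lra. fold b.
  replace (/ a - / b) with (/ (a + b) / (a * b)) by (field_simplify_eq; [nra | split; lra]).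
  unfold Rdiv. apply Rmult_le_reg_r with (r := a ^ 4 * (a * b * (a + b))).
  { assert (0 < a * b) by nra. apply Rmult_lt_0_compat; [apply pow_lt; lra | nra]. }
  replace (b * / (a * a) ^ 2 * (a ^ 4 * (a * b * (a + b)))) with (b * b * (a + b) * a) by (field; lra).
  replace (8 * (/ (a + b) * / (a * b)) * (a ^ 4 * (a * b * (a + b)))) with (8 * a ^ 4) by (field; nra).
  replace (b * b) with (a * a + 1) by lra.
  assert (h2 : (a * a + 1) * (a + b) <= (2 * (a * a)) * (3 * a)) by (apply Rmult_le_compat; nra).
  nra.
Qed.

Lemma one_plus_ln_pow_le m x : 1 <= x -> (1 + ln x) ^ m <= (2 * INR m) ^ m * exp (/ 2) * sqrt x.
Proof.
  intros Hx. pose proof (ln_nonneg x Hx).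
  eapply Rle_trans; [apply (pow_le_exp (1 + ln x) (/ 2) m); lra|].
  replace (INR m / / 2) with (2 * INR m) by field.
  rewrite <- Rpower_sqrt by lra. unfold Rpower.
  replace (/ 2 * (1 + ln x)) with (/ 2 + / 2 * ln x) by ring. rewrite exp_plus. lra.
Qed.

(* With this constant, [(1 + ln n)^m / (n - 1)^2 <= em_const m * (1 / sqrt (n - 1) - 1 / sqrt n)],
   so the error terms are dominated by a telescoping series. *)
Definition em_const (m : nat) : R := 8 * ((2 * INR m) ^ m * exp (/ 2)).

Lemma em_const_pos m : 0 < em_const m.
Proof.
  unfold em_const. apply Rmult_lt_0_compat; [lra|]. apply Rmult_lt_0_compat; [|apply exp_pos].
  destruct m; [simpl; lra|]. apply pow_lt. pose proof (lt_0_INR (S m) ltac:(lia)). lra.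
Qed.

Lemma em_error_le_telescope m sg t n : (2 <= n)%nat -> 1 <= sg -> t <> 0 ->
  let B := (INR m + sg + Rabs t) * em_const m * (inv_sqrt_INR (n - 1) - inv_sqrt_INR n) in
  Rabs (fst (em_error m sg t n)) <= B /\ Rabs (snd (em_error m sg t n)) <= B.
Proof.
  intros Hn Hs Ht B.
  assert (Hx : 2 <= INR n) by (apply (le_INR 2); auto).
  enough ((INR m + sg + Rabs t) * (1 + ln (INR n)) ^ m / (INR n - 1) ^ 2 <= B)
    by (pose proof (em_error_le m sg t n Hn Hs Ht); simpl in *; lra).
  unfold B, em_const, inv_sqrt_INR. rewrite minus_INR by lia. simpl (INR 1).
  assert (Hc : 0 <= INR m + sg + Rabs t) by (pose proof (pos_INR m); pose proof (Rabs_pos t); lra).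
  pose proof (one_plus_ln_pow_le m (INR n) ltac:(lra)) as L.
  pose proof (sqrt_div_sqr_le (INR n) Hx) as S.
  assert (Hp : 0 < (INR n - 1) ^ 2) by (apply pow_lt; lra).
  set (P := (2 * INR m) ^ m * exp (/ 2)) in *.
  assert (0 <= P)
    by (unfold P; apply Rmult_le_pos; [apply pow_le; pose proof (pos_INR m); lra | left; apply exp_pos]).
  unfold Rdiv. rewrite Rmult_assoc, (Rmult_assoc _ (8 * P)).
  apply Rmult_le_compat_l; auto.
  apply Rle_trans with (P * sqrt (INR n) * / (INR n - 1) ^ 2).
  - apply Rmult_le_compat_r; [left; apply Rinv_0_lt_compat; auto | lra].
  - unfold Rdiv in S. nra.
Qed.

Definition em_tail (m : nat) (sg t : R) (M : nat) : C :=
  (Series (fun k => fst (em_error m sg t (k + M + 1))),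
   Series (fun k => snd (em_error m sg t (k + M + 1)))).

Lemma em_tail_spec m sg t M : (1 <= M)%nat -> 1 <= sg -> t <> 0 ->
  ex_series (fun k => fst (em_error m sg t (k + M + 1))) /\
  ex_series (fun k => snd (em_error m sg t (k + M + 1))) /\
  Cmod (em_tail m sg t M) <= 2 * (INR m + sg + Rabs t) * em_const m * inv_sqrt_INR M.
Proof.
  intros HM Hs Ht.
  set (c := (INR m + sg + Rabs t) * em_const m).
  assert (Hc : 0 <= c).
  { pose proof (pos_INR m); pose proof (Rabs_pos t); pose proof (em_const_pos m).
    apply Rmult_le_pos; lra. }
  assert (B : forall k, let d := c * (inv_sqrt_INR (k + M) - inv_sqrt_INR (k + M + 1)) in
            Rabs (fst (em_error m sg t (k + M + 1))) <= d /\ Rabs (snd (em_error m sg t (k + M + 1))) <= d).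
  { intros k. pose proof (em_error_le_telescope m sg t (k + M + 1) ltac:(lia) Hs Ht) as E.
    replace (k + M + 1 - 1)%nat with (k + M)%nat in E by lia. exact E. }
  destruct (Series_le_telescope _ c M Hc (fun k => proj1 (B k))) as [E1 B1].
  destruct (Series_le_telescope _ c M Hc (fun k => proj2 (B k))) as [E2 B2].
  do 2 (split; auto).
  replace (2 * (INR m + sg + Rabs t) * em_const m * inv_sqrt_INR M)
    with (c * inv_sqrt_INR M + c * inv_sqrt_INR M) by (unfold c; ring).
  eapply Rle_trans; [apply Cmod_le_Rabs_add|]. unfold em_tail; cbn [fst snd]. lra.
Qed.

(** * The Euler-Maclaurin representation *)

Fixpoint csum (a : nat -> C) (N : nat) : C :=
  match N with O => 0%C | S k => (csum a k + a (S k))%C end.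

Lemma sum_f_R0_fst_csum (a : nat -> C) N :
  sum_f_R0 (fun n => fst (a (S n))) N = fst (csum a (S N)) /\
  sum_f_R0 (fun n => snd (a (S n))) N = snd (csum a (S N)).
Proof.
  induction N as [|N [IH1 IH2]]; simpl; [split; ring|].
  rewrite IH1, IH2. split; reflexivity.
Qed.

Lemma ccontinuous_csum (F : nat -> R -> C) N x :
  (forall n, ccontinuous (F n) x) -> ccontinuous (fun p => csum (fun n => F n p) N) x.
Proof.
  intros HF. induction N as [|N IH]; cbn [csum].
  - apply ccontinuous_const.
  - apply ccontinuous_plus; auto.
Qed.

Definition em_head (m : nat) (sg t : R) (M : nat) : C :=
  (csum (fun n => dterm m sg t (INR n)) M - dterm_prim m sg t (INR M))%C.

Definition zeta_em (m : nat) (sg t : R) (M : nat) : C := (em_head m sg t M + em_tail m sg t M)%C.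

Lemma em_tail_succ m sg t M : (1 <= M)%nat -> 1 <= sg -> t <> 0 ->
  em_tail m sg t M = (em_error m sg t (S M) + em_tail m sg t (S M))%C.
Proof.
  intros HM Hs Ht. destruct (em_tail_spec m sg t M HM Hs Ht) as [E1 [E2 _]].
  unfold em_tail. rewrite (Series_incr_1 _ E1), (Series_incr_1 _ E2).
  replace (0 + M + 1)%nat with (S M) by lia.
  apply injective_projections; cbn [fst snd Cplus]; f_equal; apply Series_ext; intros k;
    replace (S k + M + 1)%nat with (k + S M + 1)%nat by lia; reflexivity.
Qed.

Lemma zeta_em_indep m sg t M : (1 <= M)%nat -> 1 <= sg -> t <> 0 ->
  zeta_em m sg t M = zeta_em m sg t 1.
Proof.
  intros HM Hs Ht. induction M as [|M IH]; [lia|].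
  destruct (Nat.eq_dec M 0) as [->|HM0]; [reflexivity|].
  rewrite <- IH by lia. unfold zeta_em, em_head.
  rewrite (em_tail_succ m sg t M) by (auto; lia). cbn [csum]. unfold em_error.
  replace (INR (S M) - 1) with (INR M) by (rewrite S_INR; ring).
  apply injective_projections; simpl; ring.
Qed.

Lemma Cmod_zeta_em_sub_head_le m sg t M : (1 <= M)%nat -> 1 <= sg -> t <> 0 ->
  Cmod (zeta_em m sg t 1 - em_head m sg t M) <= 2 * (INR m + sg + Rabs t) * em_const m * inv_sqrt_INR M.
Proof.
  intros HM Hs Ht. rewrite <- (zeta_em_indep m sg t M HM Hs Ht).
  unfold zeta_em. replace (em_head m sg t M + em_tail m sg t M - em_head m sg t M)%C
    with (em_tail m sg t M) by ring.
  apply em_tail_spec; auto.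
Qed.

Lemma Cmod_dterm_prim_le m sg t : 1 < sg -> 1 <= Rabs t ->
  exists K, forall x, 1 <= x -> Cmod (dterm_prim m sg t x) <= K / (1 + ln x).
Proof.
  intros Hs Ht. set (a := sg - 1). assert (Ha : 0 < a) by (unfold a; lra).
  set (F := INR (Factorial.fact (S m))). assert (HF : 0 <= F) by apply pos_INR.
  set (P := (INR m / (a / 2)) ^ m).
  assert (HP : 0 <= P) by (apply pow_le, Rdiv_le_0_compat; [apply pos_INR | lra]).
  exists (exp a * F * P * (2 / a)).
  intros x Hx. unfold dterm_prim.
  pose proof (Rabs_le_Cmod_one_sub_s sg t) as Hw.
  pose proof (ln_nonneg x Hx) as HL. set (z := 1 + ln x).
  eapply Rle_trans; [apply Cmod_powexp_prim_le; lra|].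
  replace (fst (one_sub_s sg t) * ln x) with (a + (- a * z)) by (unfold a, z, one_sub_s; simpl; ring).
  rewrite exp_plus. fold F.
  pose proof (pow_le_exp z (a / 2) m ltac:(unfold z; lra) ltac:(lra)) as Zp. fold P in Zp.
  assert (Hiw : / Cmod (one_sub_s sg t) <= 1) by (rewrite <- Rinv_1; apply Rinv_le_contravar; lra).
  assert (Hiw0 : 0 < / Cmod (one_sub_s sg t)) by (apply Rinv_0_lt_compat; lra).
  assert (He : exp (- a * z) * exp (a / 2 * z) <= 2 / a / z).
  { rewrite <- exp_plus. replace (- a * z + a / 2 * z) with (- (a / 2 * z)) by field.
    rewrite exp_Ropp. replace (2 / a / z) with (/ (a / 2 * z)) by (field; unfold z; lra).
    apply Rinv_le_contravar; [apply Rmult_lt_0_compat; unfold z; lra | apply le_exp_self]. }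
  pose proof (exp_pos a). pose proof (exp_pos (- a * z)).
  assert (0 <= z ^ m) by (apply pow_le; unfold z; lra).
  apply Rle_trans with (exp a * exp (- a * z) * F * z ^ m).
  { unfold Rdiv. rewrite (Rmult_assoc _ (z ^ m)). apply Rmult_le_compat_l.
    - repeat apply Rmult_le_pos; lra.
    - nra. }
  apply Rle_trans with (exp a * F * P * (exp (- a * z) * exp (a / 2 * z))).
  { replace (exp a * exp (- a * z) * F * z ^ m) with ((exp a * F * exp (- a * z)) * z ^ m) by ring.
    replace (exp a * F * P * (exp (- a * z) * exp (a / 2 * z)))
      with ((exp a * F * exp (- a * z)) * (P * exp (a / 2 * z))) by ring.
    apply Rmult_le_compat_l; [repeat apply Rmult_le_pos; lra | exact Zp]. }
  replace (exp a * F * P * (2 / a) / z) with (exp a * F * P * (2 / a / z)) by (field; unfold z; lra).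
  apply Rmult_le_compat_l; [repeat apply Rmult_le_pos; lra | exact He].
Qed.

Lemma inv_one_plus_ln_cv : Un_cv (fun N => / (1 + ln (INR (S N)))) 0.
Proof.
  intros eps He. destruct (INR_unbounded (exp (/ eps))) as [N HN].
  exists N. intros n Hn. unfold R_dist. rewrite Rminus_0_r.
  assert (HnN : INR N <= INR (S n)) by (apply le_INR; lia).
  assert (Hl : / eps < ln (INR (S n))).
  { rewrite <- (ln_exp (/ eps)). apply ln_increasing; [apply exp_pos | lra]. }
  assert (0 < / eps) by (apply Rinv_0_lt_compat; lra).
  rewrite Rabs_right by (apply Rle_ge, Rlt_le, Rinv_0_lt_compat; lra).
  rewrite <- (Rinv_inv eps). apply Rinv_lt_contravar; [apply Rmult_lt_0_compat|]; lra.
Qed.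

Lemma Un_cv_const (c : R) : Un_cv (fun _ => c) c.
Proof. intros eps He. exists 0%nat. intros n _. unfold R_dist. rewrite Rminus_diag, Rabs_R0. lra. Qed.

Lemma infinite_sum_of_Cmod_le (a : nat -> C) (L : C) (u : nat -> R) : Un_cv u 0 ->
  (forall N, Cmod (csum a (S N) - L) <= u N) ->
  infinite_sum (fun n => fst (a (S n))) (fst L) /\ infinite_sum (fun n => snd (a (S n))) (snd L).
Proof.
  intros Hu Hle. split; intros eps He; destruct (Hu eps He) as [N HN]; exists N; intros n Hn;
    specialize (HN n Hn); unfold R_dist in *; rewrite Rminus_0_r in HN;
    destruct (sum_f_R0_fst_csum a n) as [E1 E2]; pose proof (Hle n) as H;
    pose proof (Rle_abs (u n)).
  - rewrite E1. change (fst (csum a (S n)) - fst L) with (fst (csum a (S n) - L)%C).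
    pose proof (Rabs_fst_le_Cmod (csum a (S n) - L)%C). lra.
  - rewrite E2. change (snd (csum a (S n)) - snd L) with (snd (csum a (S n) - L)%C).
    pose proof (Rabs_snd_le_Cmod (csum a (S n) - L)%C). lra.
Qed.

Lemma choose_R_infinite_sum (a : nat -> R) (l : R) :
  infinite_sum a l -> choose_R (fun l => infinite_sum a l) = l.
Proof.
  intros Hl. unfold choose_R. apply (uniqueness_sum a); auto.
  apply epsilon_spec. now exists l.
Qed.

Lemma dir_re_im_eq m sg t : 1 < sg -> 1 <= Rabs t ->
  dir_re m sg t = fst (zeta_em m sg t 1) /\ dir_im m sg t = snd (zeta_em m sg t 1).
Proof.
  intros Hs Ht. assert (Ht0 : t <> 0) by (intros ->; rewrite Rabs_R0 in Ht; lra).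
  destruct (Cmod_dterm_prim_le m sg t Hs Ht) as [K HG].
  set (c := 2 * (INR m + sg + Rabs t) * em_const m).
  assert (Hcv : Un_cv (fun N => K * / (1 + ln (INR (S N))) + c * inv_sqrt_INR (S N)) 0).
  { replace 0 with (K * 0 + c * 0) by ring.
    apply CV_plus; apply CV_mult; try apply Un_cv_const.
    - apply inv_one_plus_ln_cv.
    - intros eps He. destruct (inv_sqrt_INR_cv eps He) as [N HN]. exists N. intros n Hn. apply HN; lia. }
  destruct (infinite_sum_of_Cmod_le (fun n => dterm m sg t (INR n)) (zeta_em m sg t 1) _ Hcv) as [S1 S2].
  - intros N. rewrite <- (zeta_em_indep m sg t (S N)) by (lia || lra).
    unfold zeta_em, em_head.
    replace (csum (fun n => dterm m sg t (INR n)) (S N) -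
             (csum (fun n => dterm m sg t (INR n)) (S N) - dterm_prim m sg t (INR (S N)) + em_tail m sg t (S N)))%C
      with (dterm_prim m sg t (INR (S N)) - em_tail m sg t (S N))%C by ring.
    eapply Rle_trans; [apply Cmod_triangle|]. rewrite Cmod_opp.
    apply Rplus_le_compat; [apply HG, (le_INR 1); lia | apply em_tail_spec; (lia || lra)].
  - split; [apply (choose_R_infinite_sum _ _ S1) | apply (choose_R_infinite_sum _ _ S2)].
Qed.

Lemma ccontinuous_em_head_sg m t M x : t <> 0 -> ccontinuous (fun s => em_head m s t M) x.
Proof.
  intros Ht. unfold em_head, Cminus. apply ccontinuous_plus; [|apply ccontinuous_opp].
  - apply (ccontinuous_csum (fun n s => dterm m s t (INR n))). intros n.
    split; unfold dterm, Rpower; simpl; reg.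
  - apply (ccontinuous_powexp_prim m (fun s => one_sub_s s t)); [|apply one_sub_s_neq0, Ht].
    split; unfold one_sub_s; simpl; reg.
Qed.

Lemma ccontinuous_em_head_t m sg M x : x <> 0 -> ccontinuous (fun t => em_head m sg t M) x.
Proof.
  intros Hx. unfold em_head, Cminus. apply ccontinuous_plus; [|apply ccontinuous_opp].
  - apply (ccontinuous_csum (fun n t => dterm m sg t (INR n))). intros n.
    split; unfold dterm; simpl; reg.
  - apply (ccontinuous_powexp_prim m (fun t => one_sub_s sg t)); [|apply one_sub_s_neq0, Hx].
    split; unfold one_sub_s; simpl; reg.
Qed.

Lemma choose_R_right_lim (f : R -> R) (l : R) : right_lim_at_1 f l -> choose_R (right_lim_at_1 f) = l.
Proof.
  intros Hl. unfold choose_R.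
  assert (Hc : right_lim_at_1 f (epsilon (inhabits 0) (right_lim_at_1 f)))
    by (apply epsilon_spec; now exists l).
  set (l' := epsilon _ _) in *.
  apply Rminus_diag_uniq. destruct (Req_dec (l' - l) 0) as [E|E]; auto. exfalso.
  set (e := Rabs (l' - l) / 2). assert (He : 0 < e) by (unfold e; pose proof (Rabs_pos_lt _ E); lra).
  destruct (Hc e He) as [d1 [Hd1 K1]]. destruct (Hl e He) as [d2 [Hd2 K2]].
  pose proof (Rmin_pos d1 d2 Hd1 Hd2). pose proof (Rmin_l d1 d2). pose proof (Rmin_r d1 d2).
  set (s := 1 + Rmin d1 d2 / 2).
  specialize (K1 s ltac:(unfold s; lra)). specialize (K2 s ltac:(unfold s; lra)).
  assert (Rabs (l' - l) <= Rabs (f s - l) + Rabs (f s - l')).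
  { replace (l' - l) with ((f s - l) - (f s - l')) by ring.
    eapply Rle_trans; [apply Rabs_triang|]. rewrite Rabs_Ropp. lra. }
  unfold e in *. lra.
Qed.

Definition zeta_line (m : nat) (t : R) : C := (zeta_line_re m t, zeta_line_im m t).

Lemma zeta_em_right_cont_at_1 m t : 1 <= Rabs t ->
  forall eps, 0 < eps -> exists d, 0 < d /\ forall s, 1 < s < 1 + d ->
    Cmod (zeta_em m s t 1 - zeta_em m 1 t 1) < eps.
Proof.
  intros Hat. assert (Ht0 : t <> 0) by (intros ->; rewrite Rabs_R0 in Hat; lra).
  set (c := 2 * (INR m + 2 + Rabs t) * em_const m).
  assert (Hc : 0 <= c).
  { unfold c. pose proof (pos_INR m). pose proof (Rabs_pos t). pose proof (em_const_pos m).
    apply Rmult_le_pos; lra. }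
  assert (Happrox : forall eps, 0 < eps -> exists A, ccontinuous A 1 /\
            forall s, 1 <= s <= 2 -> Cmod (zeta_em m s t 1 - A s) <= eps).
  { intros eps He. destruct (inv_sqrt_INR_eventually_le c eps Hc He) as [M [HM HcM]].
    exists (fun s => em_head m s t M). split; [apply ccontinuous_em_head_sg, Ht0|].
    intros s Hs. eapply Rle_trans; [apply Cmod_zeta_em_sub_head_le; auto; lra|].
    eapply Rle_trans; [|exact HcM]. unfold c. pose proof (em_const_pos m).
    pose proof (inv_sqrt_INR_pos M HM). apply Rmult_le_compat_r; [lra|].
    apply Rmult_le_compat_r; lra. }
  intros eps He.
  destruct (continuous_of_uniform_approx _ (fun s => 1 <= s <= 2) 1 ltac:(lra) Happrox eps He)
    as [d [Hd K]].
  exists (Rmin d 1). split; [apply Rmin_pos; lra|]. intros s Hs.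
  pose proof (Rmin_l d 1). pose proof (Rmin_r d 1).
  apply K; [lra | rewrite Rabs_right; lra].
Qed.

Lemma zeta_line_eq m t : 1 <= t -> zeta_line m t = zeta_em m 1 t 1.
Proof.
  intros Ht. assert (Hat : 1 <= Rabs t) by (rewrite Rabs_right; lra).
  apply injective_projections; [unfold zeta_line_re | unfold zeta_line_im]; simpl;
    apply choose_R_right_lim; intros eps He;
    destruct (zeta_em_right_cont_at_1 m t Hat eps He) as [d [Hd K]];
    exists d; split; auto; intros s Hs; specialize (K s Hs);
    destruct (dir_re_im_eq m s t ltac:(lra) Hat) as [E1 E2].
  - rewrite E1. exact (Rle_lt_trans _ _ _ (Rabs_fst_le_Cmod _) K).
  - rewrite E2. exact (Rle_lt_trans _ _ _ (Rabs_snd_le_Cmod _) K).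
Qed.

Lemma ccontinuous_zeta_line m x0 : 2 <= x0 -> ccontinuous (zeta_line m) x0.
Proof.
  intros Hx0. set (c := 2 * (INR m + 2 + x0) * em_const m).
  assert (Hc : 0 <= c).
  { unfold c. pose proof (pos_INR m). pose proof (em_const_pos m). apply Rmult_le_pos; lra. }
  apply (ccontinuous_of_local_uniform_approx _ x0 1); [lra|]. intros eps He.
  destruct (inv_sqrt_INR_eventually_le c eps Hc He) as [M [HM HcM]].
  exists (fun t => em_head m 1 t M). split; [apply ccontinuous_em_head_t; lra|].
  intros x Hx. apply Rabs_def2 in Hx.
  rewrite zeta_line_eq by lra.
  eapply Rle_trans; [apply Cmod_zeta_em_sub_head_le; [exact HM | lra | lra]|].
  eapply Rle_trans; [|exact HcM]. unfold c. pose proof (em_const_pos m).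
  pose proof (inv_sqrt_INR_pos M HM). apply Rmult_le_compat_r; [lra|].
  apply Rmult_le_compat_r; [lra|]. rewrite Rabs_right; lra.
Qed.

Lemma continuity_pt_zeta_abs_pow m k x0 : 2 <= x0 -> continuity_pt (fun t => zeta_abs m t ^ k) x0.
Proof.
  intros Hx0. destruct (ccontinuous_zeta_line m x0 Hx0) as [C1 C2].
  set (f := zeta_line_re m) in C1. set (g := zeta_line_im m) in C2.
  change (continuity_pt (fun t => sqrt (f t ^ 2 + g t ^ 2) ^ k) x0).
  reg. pose proof (pow2_ge_0 (f x0)). pose proof (pow2_ge_0 (g x0)). lra.
Qed.

Lemma zeta_abs_eq m t : 1 <= t -> zeta_abs m t = Cmod (zeta_em m 1 t 1).
Proof. intros Ht. rewrite <- zeta_line_eq by exact Ht. reflexivity. Qed.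

(** * Oscillation on windows of length [DeltaT] *)

Lemma inv_le_ln_sub (x : R) : 1 <= x -> / (x + 1) <= ln (x + 1) - ln x.
Proof.
  intros Hx. pose proof (ln_le_sub1 (x / (x + 1)) ltac:(apply Rdiv_lt_0_compat; lra)) as H.
  unfold Rdiv in H. rewrite ln_mult, ln_Rinv in H by (try apply Rinv_0_lt_compat; lra).
  replace (x * / (x + 1) - 1) with (- / (x + 1)) in H by (field; lra). lra.
Qed.

Lemma Cmod_csum_sub_le_harmonic (a b : nat -> C) c N : (1 <= N)%nat -> 0 <= c ->
  (forall n, (1 <= n <= N)%nat -> Cmod (a n - b n) <= c / INR n) ->
  Cmod (csum a N - csum b N) <= c * (1 + ln (INR N)).
Proof.
  intros HN Hc Hab. induction N as [|N IH]; [lia|].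
  destruct (Nat.eq_dec N 0) as [->|HN0].
  - cbn [csum]. change (INR 1) with 1. rewrite ln_1.
    replace (0 + a 1%nat - (0 + b 1%nat))%C with (a 1%nat - b 1%nat)%C by ring.
    specialize (Hab 1%nat ltac:(lia)). simpl INR in Hab. lra.
  - cbn [csum]. assert (HN1 : 1 <= INR N) by (apply (le_INR 1); lia).
    replace (csum a N + a (S N) - (csum b N + b (S N)))%C
      with ((csum a N - csum b N) + (a (S N) - b (S N)))%C by ring.
    eapply Rle_trans; [apply Cmod_triangle|].
    specialize (IH ltac:(lia) ltac:(intros; apply Hab; lia)).
    specialize (Hab (S N) ltac:(lia)). rewrite S_INR in *.
    pose proof (inv_le_ln_sub (INR N) HN1). unfold Rdiv in Hab. nra.
Qed.

Lemma Cmod_dterm_line_sub_le m u T n : (1 <= n)%nat ->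
  Cmod (dterm m 1 u (INR n) - dterm m 1 T (INR n)) <= 2 * Rabs (u - T) * ln (INR n) ^ S m / INR n.
Proof.
  intros Hn. assert (Hn1 : 1 <= INR n) by (apply (le_INR 1); auto).
  pose proof (ln_nonneg _ Hn1) as HL.
  eapply Rle_trans; [apply Cmod_le_Rabs_add|]. unfold dterm. cbn [fst snd Cminus Cplus Copp].
  rewrite Rpower_Ropp, Rpower_1 by lra. set (L := ln (INR n)) in *.
  set (A := (- L) ^ m * / INR n).
  replace (A * cos (u * L) + - (A * cos (T * L))) with (A * (cos (u * L) - cos (T * L))) by ring.
  replace (- (A * sin (u * L)) + - - (A * sin (T * L)))
    with (- (A * (sin (u * L) - sin (T * L)))) by ring.
  rewrite Rabs_Ropp, !Rabs_mult.
  assert (EA : Rabs A = L ^ m * / INR n).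
  { unfold A. rewrite Rabs_mult, <- RPow_abs, Rabs_Ropp, (Rabs_right L), (Rabs_right (/ INR n)); auto.
    apply Rle_ge, Rlt_le, Rinv_0_lt_compat; lra. lra. }
  rewrite EA.
  pose proof (Rabs_cos_sub_le (u * L) (T * L)). pose proof (Rabs_sin_sub_le (u * L) (T * L)).
  replace (u * L - T * L) with ((u - T) * L) in * by ring.
  rewrite Rabs_mult, (Rabs_right L) in * by lra.
  assert (0 <= L ^ m * / INR n)
    by (apply Rmult_le_pos; [apply pow_le; lra | apply Rlt_le, Rinv_0_lt_compat; lra]).
  replace (2 * Rabs (u - T) * L ^ S m / INR n)
    with ((L ^ m * / INR n) * (Rabs (u - T) * L + Rabs (u - T) * L)) by (simpl; field; lra).
  rewrite <- Rmult_plus_distr_l. apply Rmult_le_compat_l; auto. lra.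
Qed.

Section Window.

Variables (m : nat) (T : R) (M : nat).
Hypothesis HT : 3 <= T.
Hypothesis HM : T * T <= INR M <= T * T + 1.

Lemma window_M_ge1 : (1 <= M)%nat.
Proof. apply INR_le. simpl. nra. Qed.

Lemma window_ln_M_le : 1 + ln (INR M) <= 4 * ln T.
Proof.
  pose proof (ln_ge1 T HT).
  assert (ln (INR M) <= ln (2 * (T * T))) by (apply ln_le; nra).
  rewrite ln_mult, ln_mult in H0 by nra. pose proof (ln_le_sub1 2 ltac:(lra)). lra.
Qed.

Lemma window_sum_osc_le u : Rabs (u - T) <= DeltaT m T ->
  Cmod (csum (fun n => dterm m 1 u (INR n)) M - csum (fun n => dterm m 1 T (INR n)) M)
    <= 2 * 4 ^ (m + 2).
Proof.
  intros Hu. pose proof window_M_ge1 as HM1. pose proof window_ln_M_le as HlnM.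
  pose proof (ln_ge1 T HT) as HL.
  assert (HlnM0 : 0 <= ln (INR M)) by (apply ln_nonneg, (le_INR 1), HM1).
  destruct (DeltaT_bounds m T HT) as [HD0 HD1]. pose proof (Rabs_pos (u - T)).
  eapply Rle_trans; [apply (Cmod_csum_sub_le_harmonic _ _ (2 * Rabs (u - T) * ln (INR M) ^ S m)); auto|].
  - apply Rmult_le_pos; [lra | apply pow_le; lra].
  - intros n Hn. eapply Rle_trans; [apply Cmod_dterm_line_sub_le; lia|].
    assert (Hn1 : 1 <= INR n) by (apply (le_INR 1); lia).
    assert (INR n <= INR M) by (apply le_INR; lia).
    unfold Rdiv. apply Rmult_le_compat_r; [apply Rlt_le, Rinv_0_lt_compat; lra|].
    apply Rmult_le_compat_l; [lra|]. apply pow_incr. split; [apply ln_nonneg; auto | apply ln_le; lra].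
  - apply Rle_trans with (2 * DeltaT m T * (1 + ln (INR M)) ^ (m + 2)).
    + replace (m + 2)%nat with (S (S m)) by lia.
      assert (ln (INR M) ^ S m <= (1 + ln (INR M)) ^ S m) by (apply pow_incr; lra).
      assert (0 <= ln (INR M) ^ S m) by (apply pow_le; lra).
      replace ((1 + ln (INR M)) ^ S (S m)) with ((1 + ln (INR M)) ^ S m * (1 + ln (INR M)))
        by (simpl; ring).
      rewrite <- (Rmult_assoc (2 * DeltaT m T)). apply Rmult_le_compat_r; [lra|].
      rewrite !Rmult_assoc. apply Rmult_le_compat_l; [lra|].
      apply Rmult_le_compat; lra.
    + apply Rle_trans with (2 * DeltaT m T * (4 * ln T) ^ (m + 2)).
      * apply Rmult_le_compat_l; [lra|]. apply pow_incr; lra.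
      * unfold DeltaT. rewrite Rpow_mult_distr. right. field. apply pow_nonzero; lra.
Qed.

Lemma window_prim_le x : T - 1 <= x ->
  Cmod (dterm_prim m 1 x (INR M)) <= 2 * INR (Factorial.fact (S m)) * 4 ^ m * INR m ^ m.
Proof.
  intros Hx. pose proof window_ln_M_le as HlnM. pose proof (ln_ge1 T HT) as HL.
  assert (HlnM0 : 0 <= ln (INR M)) by (apply ln_nonneg, (le_INR 1), window_M_ge1).
  set (F := INR (Factorial.fact (S m))). assert (HF : 0 <= F) by apply pos_INR.
  assert (LmT : ln T ^ m <= INR m ^ m * T).
  { pose proof (pow_le_exp (ln T) 1 m ltac:(lra) ltac:(lra)) as Z.
    rewrite Rdiv_1_r, Rmult_1_l, exp_ln in Z by lra. exact Z. }
  pose proof (Rabs_le_Cmod_one_sub_s 1 x) as Hw. rewrite Rabs_right in Hw by lra.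
  unfold dterm_prim. eapply Rle_trans; [apply Cmod_powexp_prim_le; lra|].
  unfold one_sub_s at 1. simpl fst. rewrite Rminus_diag, Rmult_0_l, exp_0, Rmult_1_l. fold F.
  apply Rle_trans with (F * (4 * ln T) ^ m / (T / 2)).
  - unfold Rdiv. apply Rmult_le_compat.
    + apply Rmult_le_pos; [lra | apply pow_le; lra].
    + apply Rlt_le, Rinv_0_lt_compat; lra.
    + apply Rmult_le_compat_l; auto. apply pow_incr; lra.
    + apply Rinv_le_contravar; lra.
  - rewrite Rpow_mult_distr.
    replace (F * (4 ^ m * ln T ^ m) / (T / 2)) with (2 * F * 4 ^ m * (ln T ^ m / T)) by (field; lra).
    apply Rmult_le_compat_l; [apply Rmult_le_pos; [lra | apply pow_le; lra]|].
    apply Rmult_le_reg_r with T; [lra|]. unfold Rdiv. rewrite Rmult_assoc, Rinv_l by lra. lra.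
Qed.

Lemma window_tail_le x : T - 1 <= x <= T + 1 ->
  Cmod (em_tail m 1 x M) <= 2 * (INR m + 3) * em_const m.
Proof.
  intros Hx. pose proof window_M_ge1 as HM1.
  destruct (em_tail_spec m 1 x M HM1 ltac:(lra) ltac:(lra)) as [_ [_ Ht]].
  rewrite Rabs_right in Ht by lra.
  assert (HvM : inv_sqrt_INR M <= / T).
  { unfold inv_sqrt_INR. apply Rinv_le_contravar; [lra|].
    rewrite <- (sqrt_pow2 T) by lra. apply sqrt_le_1_alt. simpl. lra. }
  pose proof (em_const_pos m). pose proof (pos_INR m).
  eapply Rle_trans; [exact Ht|].
  apply Rle_trans with (2 * (INR m + 1 + x) * em_const m * / T).
  - apply Rmult_le_compat_l; auto. apply Rmult_le_pos; [|lra]. apply Rmult_le_pos; lra.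
  - replace (2 * (INR m + 1 + x) * em_const m * / T) with (2 * em_const m * ((INR m + 1 + x) / T))
      by (field; lra).
    replace (2 * (INR m + 3) * em_const m) with (2 * em_const m * (INR m + 3)) by ring.
    apply Rmult_le_compat_l; [lra|]. apply Rmult_le_reg_r with T; [lra|].
    unfold Rdiv. rewrite Rmult_assoc, Rinv_l by lra. nra.
Qed.

End Window.

Lemma zeta_em_window_osc_le m : exists K, forall T u, 3 <= T -> Rabs (u - T) <= DeltaT m T ->
  Cmod (zeta_em m 1 u 1 - zeta_em m 1 T 1) <= K.
Proof.
  exists (2 * 4 ^ (m + 2) + 2 * (2 * INR (Factorial.fact (S m)) * 4 ^ m * INR m ^ m)
          + 2 * (2 * (INR m + 3) * em_const m)).
  intros T u HT Hu. destruct (DeltaT_bounds m T HT) as [HD0 HD1].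
  assert (Hu1 : T - 1 <= u <= T + 1) by (apply Rabs_le_between' in Hu || apply Rabs_def2b in Hu; lra).
  destruct (archimed (T * T)) as [A1 A2].
  set (M := Z.to_nat (up (T * T))).
  assert (HM : T * T <= INR M <= T * T + 1).
  { unfold M. rewrite INR_IZR_INZ, Z2Nat.id by (apply le_IZR; nra). lra. }
  pose proof (window_M_ge1 T M HT HM) as HM1.
  rewrite <- (zeta_em_indep m 1 u M), <- (zeta_em_indep m 1 T M) by (auto; lra).
  unfold zeta_em, em_head.
  replace (csum (fun n => dterm m 1 u (INR n)) M - dterm_prim m 1 u (INR M) + em_tail m 1 u M
           - (csum (fun n => dterm m 1 T (INR n)) M - dterm_prim m 1 T (INR M) + em_tail m 1 T M))%C
    with ((csum (fun n => dterm m 1 u (INR n)) M - csum (fun n => dterm m 1 T (INR n)) M)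
          + (- dterm_prim m 1 u (INR M) + dterm_prim m 1 T (INR M))
          + (em_tail m 1 u M - em_tail m 1 T M))%C by ring.
  pose proof (window_sum_osc_le m T M HT HM u Hu).
  pose proof (window_prim_le m T M HT HM u ltac:(lra)).
  pose proof (window_prim_le m T M HT HM T ltac:(lra)).
  pose proof (window_tail_le m T M HT HM u Hu1). pose proof (window_tail_le m T M HT HM T ltac:(lra)).
  assert (Cmod (- dterm_prim m 1 u (INR M) + dterm_prim m 1 T (INR M))%C
            <= 2 * (2 * INR (Factorial.fact (S m)) * 4 ^ m * INR m ^ m))
    by (eapply Rle_trans; [apply Cmod_triangle|]; rewrite Cmod_opp; lra).
  assert (Cmod (em_tail m 1 u M - em_tail m 1 T M)%C <= 2 * (2 * (INR m + 3) * em_const m))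
    by (unfold Cminus; eapply Rle_trans; [apply Cmod_triangle|]; rewrite Cmod_opp; lra).
  eapply Rle_trans; [apply Cmod_triangle|].
  eapply Rle_trans; [apply Rplus_le_compat_r, Cmod_triangle|]. lra.
Qed.

(** * Pointwise bounds versus window means *)

Definition log_power_bounded (f : R -> R) : Prop :=
  forall eps : R, 0 < eps -> exists C t0 : R, forall t : R, t0 <= t -> f t <= C * Rpower (ln t) eps.

Definition window_means_log_bounded (f Delta : R -> R) : Prop :=
  forall eps : R, 0 < eps -> forall k : nat, (1 <= k)%nat ->
    exists C T0 : R, exp 1 < T0 /\ forall T : R, T0 <= T ->
      exists pr : Riemann_integrable (fun t => f t ^ (2 * k)) (T - Delta T) (T + Delta T),
        / (2 * Delta T) * RiemannInt pr <= C * Rpower (ln T) eps.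

Lemma RiemannInt_mean_le (f : R -> R) a b B (pr : Riemann_integrable f a b) : a < b ->
  (forall x, a < x < b -> f x <= B) -> / (b - a) * RiemannInt pr <= B.
Proof.
  intros Hab HB. pose proof (RiemannInt_P19 pr (RiemannInt_P14 a b B) (Rlt_le _ _ Hab) HB) as I.
  rewrite RiemannInt_P15 in I. apply Rmult_le_reg_l with (b - a); [lra|].
  rewrite <- Rmult_assoc, Rinv_r, Rmult_1_l by lra. lra.
Qed.

Lemma RiemannInt_mean_ge (f : R -> R) a b B (pr : Riemann_integrable f a b) : a < b ->
  (forall x, a < x < b -> B <= f x) -> B <= / (b - a) * RiemannInt pr.
Proof.
  intros Hab HB. pose proof (RiemannInt_P19 (RiemannInt_P14 a b B) pr (Rlt_le _ _ Hab) HB) as I.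
  rewrite RiemannInt_P15 in I. apply Rmult_le_reg_l with (b - a); [lra|].
  rewrite <- Rmult_assoc, Rinv_r, Rmult_1_l by lra. lra.
Qed.

Section Windows.

Variables (f Delta : R -> R).
Hypothesis f_nonneg : forall t, 0 <= f t.
Hypothesis Delta_bounds : forall T, 3 <= T -> 0 < Delta T <= 1.
Hypothesis f_pow_continuous : forall k x, 2 <= x -> continuity_pt (fun t => f t ^ k) x.

Lemma window_means_of_log_power_bounded :
  log_power_bounded f -> window_means_log_bounded f Delta.
Proof.
  intros Hf eps He k Hk.
  assert (Hk' : 0 < INR (2 * k)) by (apply lt_0_INR; lia).
  set (e' := eps / INR (2 * k)). assert (He' : 0 < e') by (apply Rdiv_lt_0_compat; lra).
  destruct (Hf e' He') as [C [t0 Ht0]].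
  exists (Rabs C ^ (2 * k) * Rpower 2 eps), (Rmax 3 (t0 + 1) + 1).
  pose proof (Rmax_l 3 (t0 + 1)). pose proof (Rmax_r 3 (t0 + 1)).
  split; [pose proof exp_le_3; lra|].
  intros T HT. destruct (Delta_bounds T ltac:(lra)) as [HD0 HD1].
  assert (pr : Riemann_integrable (fun t => f t ^ (2 * k)) (T - Delta T) (T + Delta T)).
  { apply continuity_implies_RiemannInt; [lra|]. intros x Hx. apply f_pow_continuous. lra. }
  exists pr. pose proof (ln_ge1 T ltac:(lra)) as HL.
  (* on the window [ln t <= 2 ln T], whence the factor [2 ^ eps] *)
  replace (Rabs C ^ (2 * k) * Rpower 2 eps * Rpower (ln T) eps)
    with ((Rabs C * Rpower (2 * ln T) e') ^ (2 * k)).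
  2: { rewrite Rpow_mult_distr, Rmult_assoc. f_equal.
       rewrite <- Rpower_pow by apply exp_pos. rewrite Rpower_mult.
       replace (e' * INR (2 * k)) with eps by (unfold e'; field; lra).
       rewrite Rpower_mult_distr; auto; lra. }
  replace (2 * Delta T) with (T + Delta T - (T - Delta T)) by ring.
  apply RiemannInt_mean_le; [lra|]. intros x Hx.
  assert (Hx0 : 0 < ln x) by (rewrite <- ln_1; apply ln_increasing; lra).
  assert (Hx1 : ln x <= 2 * ln T).
  { replace (2 * ln T) with (ln (T * T)) by (rewrite ln_mult by lra; ring). apply ln_le; nra. }
  pose proof (Ht0 x ltac:(lra)). pose proof (f_nonneg x).
  assert (R1 : Rpower (ln x) e' <= Rpower (2 * ln T) e') by (apply Rle_Rpower_l; lra).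
  pose proof (exp_pos (e' * ln (ln x))). pose proof (Rle_abs C).
  apply pow_incr. split; [lra|].
  apply Rle_trans with (Rabs C * Rpower (ln x) e'); [unfold Rpower in *; nra|].
  apply Rmult_le_compat_l; [apply Rabs_pos | auto].
Qed.

Lemma log_power_bounded_of_window_means :
  (exists K, forall T u, 3 <= T -> Rabs (u - T) <= Delta T -> f T - K <= f u) ->
  window_means_log_bounded f Delta -> log_power_bounded f.
Proof.
  intros [K HK] Hmean eps He.
  destruct (Hmean (2 * eps) ltac:(lra) 1%nat ltac:(lia)) as [C [T0 [HT0 HP]]].
  exists (Rmax K 0 + sqrt (Rabs C)), (Rmax T0 3).
  intros t Ht. pose proof (Rmax_l T0 3). pose proof (Rmax_r T0 3).
  pose proof (Rmax_l K 0). pose proof (Rmax_r K 0).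
  destruct (HP t ltac:(lra)) as [pr Hpr].
  pose proof (ln_ge1 t ltac:(lra)) as HL.
  set (Rp := Rpower (ln t) eps).
  assert (HR : 1 <= Rp) by (apply Rpower_ge1; lra).
  pose proof (sqrt_pos (Rabs C)).
  destruct (Delta_bounds t ltac:(lra)) as [HD0 HD1].
  destruct (Rle_or_lt (f t) (Rmax K 0)) as [Hz|Hz]; [nra|].
  set (y := f t - Rmax K 0).
  (* [f >= y] on the whole window, so its mean square is at least [y ^ 2] *)
  assert (Hy2 : y ^ 2 <= C * Rp ^ 2).
  { replace (Rp ^ 2) with (Rpower (ln t) (2 * eps))
      by (unfold Rp; rewrite <- Rpower_pow, Rpower_mult by apply exp_pos; f_equal; simpl; ring).
    eapply Rle_trans; [|apply Hpr].
    replace (2 * Delta t) with (t + Delta t - (t - Delta t)) by ring.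
    apply RiemannInt_mean_ge; [lra|]. intros x Hx.
    assert (Hxl : Rabs (x - t) <= Delta t) by (apply Rabs_le; lra).
    pose proof (HK t x ltac:(lra) Hxl).
    simpl (2 * 1)%nat. apply pow_incr. unfold y. lra. }
  assert (Hy3 : y <= sqrt (Rabs C) * Rp).
  { rewrite <- (sqrt_pow2 y) by (unfold y; lra). rewrite <- (sqrt_pow2 Rp) by lra.
    rewrite <- sqrt_mult_alt by apply Rabs_pos. apply sqrt_le_1_alt.
    pose proof (Rle_abs C). assert (0 <= Rp ^ 2) by (apply pow_le; lra). nra. }
  unfold y in Hy3. nra.
Qed.

End Windows.

Lemma zeta_abs_window_lower_bound m : exists K, forall T u, 3 <= T -> Rabs (u - T) <= DeltaT m T ->
  zeta_abs m T - K <= zeta_abs m u.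
Proof.
  destruct (zeta_em_window_osc_le m) as [K HK]. exists K. intros T u HT Hu.
  destruct (DeltaT_bounds m T HT).
  assert (Hu1 : 1 <= u) by (apply Rabs_le_between' in Hu || apply Rabs_def2b in Hu; lra).
  rewrite !zeta_abs_eq by lra.
  pose proof (HK T u HT Hu).
  pose proof (Cmod_triangle (zeta_em m 1 u 1) (zeta_em m 1 T 1 - zeta_em m 1 u 1)%C).
  replace (zeta_em m 1 u 1 + (zeta_em m 1 T 1 - zeta_em m 1 u 1))%C with (zeta_em m 1 T 1) in * by ring.
  rewrite <- Cmod_opp, Copp_minus_distr in *. lra.
Qed.

Theorem theorem1 (m : nat) :
  (forall eps : R, 0 < eps ->
     exists C t0 : R, forall t : R, t0 <= t ->
       zeta_abs m t <= C * Rpower (ln t) eps)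
  <->
  (forall eps : R, 0 < eps -> forall k : nat, (1 <= k)%nat ->
     exists C T0 : R, exp 1 < T0 /\
       forall T : R, T0 <= T ->
         exists pr : Riemann_integrable (fun t => zeta_abs m t ^ (2 * k))
                                         (T - DeltaT m T) (T + DeltaT m T),
           / (2 * DeltaT m T) * RiemannInt pr <= C * Rpower (ln T) eps).
Proof.
  split.
  - exact (window_means_of_log_power_bounded (zeta_abs m) (DeltaT m) (fun t => sqrt_pos _)
             (DeltaT_bounds m) (continuity_pt_zeta_abs_pow m)).
  - exact (log_power_bounded_of_window_means (zeta_abs m) (DeltaT m) (DeltaT_bounds m)
             (zeta_abs_window_lower_bound m)).
Qed.
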